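(* Let $2 \le t < k < v$ and let $(X,\mathcal{B})$ be a $t$-$(v,k,1)$-design. Let $B = \{x_1,\dots,x_k\} \in \mathcal{B}$. Then the cutsets for $B$ are exactly the sets $\mathcal{C}_1,\dots,\mathcal{C}_k$, where $\mathcal{C}_j = \{B' \in \mathcal{B}\setminus\{B\} : x_j \in B'\}$.
   Context: A $t$-$(v,k,\lambda)$-design is a set $X$ of $v$ points together with a collection $\mathcal{B}$ of $k$-subsets of $X$ (blocks) such that every $t$-subset of $X$ lies in exactly $\lambda$ blocks. For a fixed block $B$, a repair set for $B$ is a subset $\mathcal{P}\subseteq \mathcal{B}\setminus\{B\}$ with $B \subseteq \bigcup_{B'\in\mathcal{P}} B'$. Each block of $\mathcal{B}\setminus\{B\}$ is either available or not; a repair set is available if all its blocks are available. A cutset for $B$ is a subset $\mathcal{B}'\subseteq\mathcal{B}\setminus\{B\}$, minimal with respect to inclusion, such that if every block in $\mathcal{B}'$ is unavailable then no available repair set for $B$ exists (i.e., $(\mathcal{B}\setminus\{B\})\setminus\mathcal{B}'$ contains no repair set for $B$). *)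

From mathcomp Require Import all_boot.
Set Implicit Arguments. Unset Strict Implicit. Unset Printing Implicit Defensive.

(* A t-(v,k,lambda) design on the point set T (v = #|T|) with block set D. *)
Definition is_design (T : finType) (t k lambda : nat) (D : {set {set T}}) : Prop :=
  (forall B, B \in D -> #|B| = k) /\
  (forall S : {set T}, #|S| = t -> #|[set B in D | S \subset B]| = lambda).

Definition repair_set (T : finType) (D : {set {set T}}) (B : {set T})
    (P : {set {set T}}) : Prop :=
  P \subset D :\ B /\ B \subset cover P.

Definition kills (T : finType) (D : {set {set T}}) (B : {set T})
    (C : {set {set T}}) : Prop :=
  ~ exists P : {set {set T}}, P \subset (D :\ B) :\: C /\ repair_set D B P.

Definition cutset (T : finType) (D : {set {set T}}) (B : {set T})
    (C : {set {set T}}) : Prop :=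
  C \subset D :\ B /\ kills D B C /\
  (forall C' : {set {set T}}, C' \subset D :\ B -> kills D B C' -> C' \subset C -> C' = C).

From mathcomp Require Import all_boot.

Set Implicit Arguments.
Unset Strict Implicit.
Unset Printing Implicit Defensive.

(* Removing all blocks through one point x of B kills B, since no remaining
   block covers x; conversely, if every point of B is still covered by some
   available block, those blocks form a repair set.  So the cutsets are the
   minimal "stars" [st(x) = blocks other than B through x].  In a Steiner
   system with 2 <= t < k < v the stars of B are pairwise incomparable: for
   x <> y in B pick z outside B and t - 2 further points W of B; the block
   through x, z and W differs from B and cannot contain y, since otherwise it
   would share the t points x, y, W with B. *)

Definition star (T : finType) (D : {set {set T}}) (B : {set T}) (x : T) :=
  [set B' in D :\ B | x \in B'].

Lemma exists_subset_card (T : finType) (A : {set T}) n :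
  n <= #|A| -> exists2 W : {set T}, W \subset A & #|W| = n.
Proof.
move/card_geqP=> [s [s_uniq s_size sA]].
exists [set x in s]; first by apply/subsetP=> x; rewrite inE => /sA.
by rewrite cardsE (card_uniqP s_uniq).
Qed.

Section Stars.
Variables (T : finType) (D : {set {set T}}) (B : {set T}).

Lemma star_sub x : star D B x \subset D :\ B.
Proof. by apply/subsetP=> b; rewrite inE => /andP[]. Qed.

Lemma kills_star (C : {set {set T}}) :
  kills D B C <-> exists2 x, x \in B & star D B x \subset C.
Proof.
split=> [killC | [x xB starC] [P [PC [_ B_cover]]]].
- have [/existsP[x /andP[xB starC]] | /existsPn no_star] :=
    boolP [exists x in B, star D B x \subset C]; first by exists x.
  case: killC.
  exists ((D :\ B) :\: C); split=> //; split; first exact: subsetDl.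
  apply/subsetP=> x xB; have /subsetPn[b] : ~~ (star D B x \subset C).
    by apply: contra (no_star x) => ->; rewrite xB.
  rewrite inE => /andP[bD xb] bC.
  by apply/bigcupP; exists b; rewrite // inE bC.
- have /bigcupP[b bP xb] := subsetP B_cover x xB.
  have := subsetP PC b bP; rewrite inE => /andP[bNC bD].
  by have := subsetP starC b; rewrite inE bD xb (negbTE bNC) => /(_ isT).
Qed.

Lemma cutset_star_iff (C : {set {set T}}) :
  {in B &, forall x y, star D B y \subset star D B x -> y = x} ->
  cutset D B C <-> exists2 x, x \in B & C = star D B x.
Proof.
move=> star_antichain; split.
- move=> [_ [/kills_star[x xB starC] minC]].
  exists x => //; apply/esym/minC=> //; first exact: star_sub.
  by apply/kills_star; exists x.
- move=> [x xB ->]; split; first exact: star_sub.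
  split; first by apply/kills_star; exists x.
  move=> C' _ /kills_star[y yB starC'] C'x.
  have yx := star_antichain x y xB yB (subset_trans starC' C'x).
  by subst y; apply/eqP; rewrite eqEsubset C'x starC'.
Qed.

End Stars.

Section SteinerSystem.
Variables (T : finType) (t k : nat) (D : {set {set T}}).
Hypothesis steiner : is_design t k 1 D.

Lemma steiner_block_exists (S : {set T}) :
  #|S| = t -> exists2 B', B' \in D & S \subset B'.
Proof.
case: steiner => _ one_block cardS.
have /card_gt0P[b] : 0 < #|[set B' in D | S \subset B']| by rewrite one_block.
by rewrite inE => /andP[bD Sb]; exists b.
Qed.

Lemma steiner_block_unique (S B1 B2 : {set T}) :
  #|S| = t -> B1 \in D -> B2 \in D -> S \subset B1 -> S \subset B2 -> B1 = B2.
Proof.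
case: steiner => _ one_block cardS B1D B2D SB1 SB2.
have /eqP/cards1P[b Sblocks] := one_block S cardS.
have : B1 \in [set B' in D | S \subset B'] by rewrite inE B1D SB1.
have : B2 \in [set B' in D | S \subset B'] by rewrite inE B2D SB2.
by rewrite Sblocks !inE => /eqP-> /eqP->.
Qed.

Hypotheses (t_ge2 : 2 <= t) (t_lt_k : t < k) (k_lt_v : k < #|T|).

Lemma steiner_separates (B : {set T}) x y :
  B \in D -> x \in B -> y \in B -> x != y ->
  exists2 B', B' \in star D B x & y \notin B'.
Proof.
move=> BD xB yB xy.
have cardB : #|B| = k by case: steiner => block_size _; apply: block_size.
have [z zNB] : exists z, z \notin B.
  have /card_gt0P[z] : 0 < #|~: B| by rewrite cardsCs setCK cardB subn_gt0.
  by rewrite inE; exists z.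
have [W WB cardW] : exists2 W : {set T}, W \subset B :\ x :\ y & #|W| = t - 2.
  apply: exists_subset_card.
  have := cardsD1 x B; have := cardsD1 y (B :\ x).
  rewrite xB cardB !inE eq_sym xy yB /= => -> k_eq.
  by rewrite addnA in k_eq; rewrite leq_subLR -k_eq ltnW.
have WNxyz : [/\ x \notin W, y \notin W & z \notin W].
  by split; apply/negP=> /(subsetP WB); rewrite !inE ?eqxx ?(negbTE zNB) ?andbF.
case: WNxyz => xNW yNW zNW.
have xz : x != z by apply: contraNneq zNB => <-.
have [B' B'D xzW_B'] : exists2 B', B' \in D & x |: (z |: W) \subset B'.
  apply: steiner_block_exists.
  by rewrite !cardsU1 !inE negb_or xz xNW zNW cardW /= addnA subnKC.
have xB' : x \in B' by apply: (subsetP xzW_B'); rewrite !inE eqxx.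
have zB' : z \in B' by apply: (subsetP xzW_B'); rewrite !inE eqxx orbT.
have B'NB : B' != B by apply: contraNneq zNB => <-.
exists B'; first by rewrite !inE B'NB B'D xB'.
apply/negP=> yB'; have /negP[] := zNB.
suff -> : B = B' by [].
apply: (@steiner_block_unique (y |: (x |: W))).
- by rewrite !cardsU1 !inE negb_or eq_sym xy xNW yNW cardW /= addnA subnKC.
- exact: BD.
- exact: B'D.
- apply/subsetP=> u; rewrite !inE => /or3P[/eqP-> | /eqP-> | /(subsetP WB)] //.
  by rewrite !inE => /and3P[].
- apply/subsetP=> u; rewrite !inE => /or3P[/eqP-> | /eqP-> | uW] //.
  by apply: (subsetP xzW_B'); rewrite !inE uW !orbT.
Qed.

Lemma steiner_star_antichain (B : {set T}) : B \in D ->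
  {in B &, forall x y, star D B y \subset star D B x -> y = x}.
Proof.
move=> BD x y xB yB starYX; apply/eqP; apply: contraT => yx.
have [B' B'y xNB'] := steiner_separates BD yB xB yx.
by have := subsetP starYX B' B'y; rewrite inE (negbTE xNB') andbF.
Qed.

End SteinerSystem.

Theorem mainTheorem7 (T : finType) (t k : nat) (D : {set {set T}}) (B : {set T}) :
  2 <= t -> t < k -> k < #|T| ->
  is_design t k 1 D -> B \in D ->
  forall C : {set {set T}},
    cutset D B C <-> exists2 x, x \in B & C = [set B' in D :\ B | x \in B'].
Proof.
move=> t_ge2 t_lt_k k_lt_v steiner BD C.
exact/cutset_star_iff/(steiner_star_antichain steiner t_ge2 t_lt_k k_lt_v BD).
Qed.
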